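(* Let $a,b,d>0$, $c\in\mathbb{R}$, and let $\phi(x)=\frac{ax^3+bx^2+cx+d}{x^3}$ for $x>0$. \begin{description} \item[(a)] The cubic polynomial $Q(x)=(4a)x^3-(b^2)x^2-(18abd)x+27a^2d^2+4db^3$ has a unique negative zero. \item[(b)] Let $c_{-}$ denote the unique negative zero of $Q$. If $c>c_{-}$, then for every initial value $x_0>0$ all iterates of $x_{n+1}=\phi(x_n)$ are positive, i.e. nonpositive iterates never occur. \item[(c)] Let $c^{*}=-\sqrt{3bd}$. Then $c_{-}<c^{*}$. \item[(d)] If $c\geq c^{*}$ then $\phi$ is decreasing on $(0,\infty)$ and has a unique (positive) equilibrium. If $c_{-}<c<c^{*}$ then $\phi$ has a local minimum point $x_m$ and a local maximum point $x_M$, where $$0<x_{m}=\frac{-c-\sqrt{c^2-3bd}}{b}<x_{M}=\frac{-c+\sqrt{c^2-3bd}}{b}.$$ \end{description}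
   Context: The map $\phi$ is the right-hand side of the difference equation $x_{n+1}=\frac{ax_n^3+bx_n^2+cx_n+d}{x_n^3}$, $x_0>0$. An equilibrium of $\phi$ is a point $t>0$ with $\phi(t)=t$. *)

From HB Require Import structures.
From mathcomp Require Import all_boot all_order all_algebra.
Set Implicit Arguments. Unset Strict Implicit. Unset Printing Implicit Defensive.
Import Order.TTheory GRing.Theory Num.Theory.
Local Open Scope ring_scope.

Definition phi (R : rcfType) (a b c d : R) (x : R) : R :=
  (a * x ^+ 3 + b * x ^+ 2 + c * x + d) / x ^+ 3.

Definition Qpol (R : rcfType) (a b d : R) (x : R) : R :=
  4 * a * x ^+ 3 - b ^+ 2 * x ^+ 2 - 18 * a * b * d * x
  + 27 * a ^+ 2 * d ^+ 2 + 4 * d * b ^+ 3.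

Definition cstar (R : rcfType) (b d : R) : R := - Num.sqrt (3 * b * d).

Definition local_min_pt (R : rcfType) (f : R -> R) (x : R) : Prop :=
  exists2 e : R, 0 < e & forall y, 0 < y -> `|y - x| < e -> f x <= f y.
Definition local_max_pt (R : rcfType) (f : R -> R) (x : R) : Prop :=
  exists2 e : R, 0 < e & forall y, 0 < y -> `|y - x| < e -> f y <= f x.

From HB Require Import structures.
From mathcomp Require Import all_boot all_order all_algebra.
From mathcomp Require Import ring lra polyrcf.
Set Implicit Arguments. Unset Strict Implicit. Unset Printing Implicit Defensive.
Import Order.TTheory GRing.Theory Num.Theory.
Local Open Scope ring_scope.

(* For x > 0 the numerator of phi vanishes exactly when c equals
   k(x) = -(a x^3 + b x^2 + d) / x, and Q(k(x)) is minus a square times a positive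
   quantity.  If c_- < 0 is a root of Q then Q(t) = (t - c_-) P(t) with P > 0 on
   (-oo, 0], so a nonpositive t has Q(t) <= 0 iff t <= c_-; hence k(x) <= c_- < c
   and phi(x) > 0.  The same factorization gives uniqueness of c_-, and c_- < c*
   because Q(c* ) > 0.  Existence of c_- and of an equilibrium follows from the
   intermediate value theorem for polynomials.  In the variable u = 1/x, phi is the
   cubic psi(u) = a + b u + c u^2 + d u^3: it is increasing on u > 0 when c >= c*,
   and otherwise has critical points (-c -+ sqrt(c^2 - 3bd)) / (3d) = 1/x_M, 1/x_m. *)

Section RealClosedFieldFacts.
Variable R : rcfType.

Lemma lead_coef_Poly (s : seq R) : last 0 s != 0 -> lead_coef (Poly s) = last 0 s.
Proof. by move=> s_neq0; rewrite /lead_coef (PolyK s_neq0) nth_last. Qed.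

Lemma poly_root_gt (p : {poly R}) (x0 : R) :
  0 < lead_coef p -> p.[x0] < 0 -> exists2 x, x0 < x & root p x.
Proof.
move=> lc_gt0 px0_lt0; have [n pn_ge] := poly_pinfty_gt_lc lc_gt0.
have x0_le : x0 <= Num.max n x0 by rewrite le_max lexx orbT.
have [|x /andP[x0_lt_x _] px] := @poly_ivtoo _ p _ _ x0_le.
  by rewrite nmulr_rlt0 // (lt_le_trans lc_gt0) // pn_ge // le_max lexx.
by exists x.
Qed.

Lemma decreasing_fixed_point_uniq (f : R -> R) (s t : R) :
  (forall x y, 0 < x -> x < y -> f y < f x) ->
  0 < s -> 0 < t -> f s = s -> f t = t -> s = t.
Proof.
move=> f_decr s_gt0 t_gt0 fs ft.
case: (ltgtP s t) => // [st|ts].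
  by have := f_decr _ _ s_gt0 st; rewrite fs ft ltNge (ltW st).
by have := f_decr _ _ t_gt0 ts; rewrite fs ft ltNge (ltW ts).
Qed.

End RealClosedFieldFacts.

Section NegativeRootOfQ.
Variables (R : rcfType) (a b d : R).
Hypotheses (a_gt0 : 0 < a) (b_gt0 : 0 < b) (d_gt0 : 0 < d).

Definition Qslope (r t : R) :=
  4 * a * (t ^+ 2 + t * r + r ^+ 2) - b ^+ 2 * (t + r) - 18 * a * b * d.

Lemma QpolB (r t : R) : Qpol a b d t - Qpol a b d r = (t - r) * Qslope r t.
Proof. by rewrite /Qpol /Qslope; ring. Qed.

Lemma Qpol0_gt0 : 0 < Qpol a b d 0.
Proof.
rewrite /Qpol !expr0n !mulr0 !subr0 add0r.
by rewrite addr_gt0 ?mulr_gt0 ?exprn_gt0.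
Qed.

Lemma Qslope_gt0 (r t : R) : r < 0 -> Qpol a b d r = 0 -> t <= 0 -> 0 < Qslope r t.
Proof.
move=> r_lt0 Qr t_le0.
(* [Q 0 = -r * Qslope r 0] with [Q 0 > 0] gives [Qslope r 0 > 0]; the other terms are [>= 0]. *)
have slope0 : 0 < Qslope r 0.
  have := QpolB r 0; rewrite Qr subr0 sub0r => Q0E.
  by have := Qpol0_gt0; rewrite Q0E pmulr_rgt0 // oppr_gt0.
have -> : Qslope r t = Qslope r 0 + 4 * a * t ^+ 2 + 4 * a * (t * r) - b ^+ 2 * t.
  by rewrite /Qslope; ring.
have at2_ge0 : 0 <= a * t ^+ 2 by rewrite mulr_ge0 ?sqr_ge0 ?ltW.
have atr_ge0 : 0 <= a * (t * r) by apply: mulr_ge0; [exact: ltW | nra].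
have b2t_le0 : b ^+ 2 * t <= 0 by rewrite mulr_ge0_le0 ?sqr_ge0.
lra.
Qed.

Lemma Qpol_le0 (r t : R) : r < 0 -> Qpol a b d r = 0 -> t <= 0 ->
  (Qpol a b d t <= 0) = (t <= r).
Proof.
move=> r_lt0 Qr t_le0; have := QpolB r t; rewrite Qr subr0 => ->.
by rewrite pmulr_lle0 ?Qslope_gt0 // subr_le0.
Qed.

Lemma Qpol_neg_root_uniq (r s : R) : r < 0 -> Qpol a b d r = 0 ->
  s < 0 -> Qpol a b d s = 0 -> s = r.
Proof.
move=> r_lt0 Qr s_lt0 Qs; apply/eqP; rewrite eq_le.
rewrite -(Qpol_le0 r_lt0 Qr (ltW s_lt0)) -(Qpol_le0 s_lt0 Qs (ltW r_lt0)).
by rewrite Qr Qs lexx.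
Qed.

Lemma Qpol_neg_root : exists2 r : R, r < 0 & Qpol a b d r = 0.
Proof.
pose p := Poly [:: - Qpol a b d 0; - (18 * a * b * d); b ^+ 2; 4 * a].
have pE x : p.[x] = - Qpol a b d (- x) by rewrite horner_Poly /= /Qpol; ring.
have lc_gt0 : 0 < lead_coef p.
  by rewrite lead_coef_Poly /= ?gt_eqF ?mulr_gt0.
have [|x x_gt0 /rootP px] := @poly_root_gt _ p 0 lc_gt0.
  by rewrite pE oppr0 oppr_lt0 Qpol0_gt0.
exists (- x); first by rewrite oppr_lt0.
by apply/eqP; rewrite -oppr_eq0 -pE px.
Qed.

Lemma Qpol_cstar_gt0 : 0 < Qpol a b d (cstar b d).
Proof.
have bd_ge0 : 0 <= 3 * b * d by rewrite !mulr_ge0 ?ltW.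
have := sqr_sqrtr bd_ge0; have := sqrtr_ge0 (3 * b * d).
rewrite /cstar /Qpol; set s := Num.sqrt _ => s_ge0 s2.
have -> : 4 * a * (- s) ^+ 3 - b ^+ 2 * (- s) ^+ 2 - 18 * a * b * d * (- s)
          + 27 * a ^+ 2 * d ^+ 2 + 4 * d * b ^+ 3
        = 6 * a * b * d * s + b ^+ 3 * d + 27 * a ^+ 2 * d ^+ 2
          - (s ^+ 2 - 3 * b * d) * (4 * a * s + b ^+ 2) by ring.
rewrite s2 subrr mul0r subr0.
have : 0 <= a * b * d * s by rewrite mulr_ge0 // !mulr_ge0 // ltW.
have : 0 < b ^+ 3 * d by rewrite mulr_gt0 ?exprn_gt0.
have : 0 < a ^+ 2 * d ^+ 2 by rewrite mulr_gt0 ?exprn_gt0.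
lra.
Qed.

Lemma neg_root_lt_cstar (r : R) : r < 0 -> Qpol a b d r = 0 -> r < cstar b d.
Proof.
move=> r_lt0 Qr; rewrite ltNge -(Qpol_le0 r_lt0 Qr) -?ltNge ?Qpol_cstar_gt0 //.
by rewrite /cstar oppr_le0 sqrtr_ge0.
Qed.

End NegativeRootOfQ.

Section ThePhiMap.
Variables (R : rcfType) (a b c d : R).
Hypotheses (a_gt0 : 0 < a) (b_gt0 : 0 < b) (d_gt0 : 0 < d).

(* [- (a x^3 + b x^2 + d) / x] is the value of [c] for which the numerator of [phi] vanishes at [x]. *)
Lemma Qpol_numerator_root_le0 (x : R) : 0 < x ->
  Qpol a b d (- (a * x ^+ 3 + b * x ^+ 2 + d) / x) <= 0.
Proof.
move=> x_gt0.
have -> : Qpol a b d (- (a * x ^+ 3 + b * x ^+ 2 + d) / x)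
        = - (2 * a * x ^+ 2 + b * x - d / x) ^+ 2 * ((b + a * x) ^+ 2 + 4 * a * d / x).
  by rewrite /Qpol; field; rewrite gt_eqF.
rewrite mulNr oppr_le0 mulr_ge0 ?sqr_ge0 // addr_ge0 ?sqr_ge0 // ltW //.
by rewrite divr_gt0 ?mulr_gt0.
Qed.

Lemma phi_gt0 (r x : R) : r < 0 -> Qpol a b d r = 0 -> r < c -> 0 < x -> 0 < phi a b c d x.
Proof.
move=> r_lt0 Qr r_lt_c x_gt0; set k := - (a * x ^+ 3 + b * x ^+ 2 + d) / x.
have k_lt0 : k < 0 by rewrite /k mulNr oppr_lt0 divr_gt0 // !addr_gt0 ?mulr_gt0 ?exprn_gt0.
have k_le_r : k <= r.
  by rewrite -(Qpol_le0 a_gt0 b_gt0 d_gt0 r_lt0 Qr (ltW k_lt0)) ?Qpol_numerator_root_le0.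
rewrite /phi; have -> : a * x ^+ 3 + b * x ^+ 2 + c * x + d = x * (c - k).
  by rewrite /k; field; rewrite gt_eqF.
by rewrite divr_gt0 ?exprn_gt0 // mulr_gt0 // subr_gt0 (le_lt_trans k_le_r).
Qed.

Lemma iter_phi_gt0 (r x : R) (n : nat) : r < 0 -> Qpol a b d r = 0 -> r < c -> 0 < x ->
  0 < iter n (phi a b c d) x.
Proof.
move=> r_lt0 Qr r_lt_c x_gt0; elim: n => [|n IHn] //=.
exact: phi_gt0 r_lt0 Qr r_lt_c IHn.
Qed.

Lemma phi_fixed_point : exists2 t : R, 0 < t & phi a b c d t = t.
Proof.
pose p := Poly [:: - d; - c; - b; - a; 1].
have pE t : p.[t] = t ^+ 4 - (a * t ^+ 3 + b * t ^+ 2 + c * t + d).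
  by rewrite horner_Poly /=; ring.
have lc_gt0 : 0 < lead_coef p by rewrite lead_coef_Poly /= ?oner_neq0.
have [|t t_gt0 /rootP pt] := @poly_root_gt _ p 0 lc_gt0.
  by rewrite pE !expr0n /= !mulr0 !add0r oppr_lt0.
exists t => //; move/eqP: pt; rewrite pE subr_eq0 => /eqP num.
by rewrite /phi -num; field; rewrite gt_eqF.
Qed.

Definition psi (u : R) := a + b * u + c * u ^+ 2 + d * u ^+ 3.

Lemma phiE (x : R) : x != 0 -> phi a b c d x = psi x^-1.
Proof. by move=> x_neq0; rewrite /phi /psi; field. Qed.

Lemma psiB (u v : R) :
  psi u - psi v = (u - v) * (b + c * (u + v) + d * (u ^+ 2 + u * v + v ^+ 2)).
Proof. by rewrite /psi; ring. Qed.

Lemma cstar_le_sqr : cstar b d <= c -> c <= 0 -> c ^+ 2 <= 3 * b * d.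
Proof.
have bd_ge0 : 0 <= 3 * b * d by rewrite !mulr_ge0 ?ltW.
have := sqr_sqrtr bd_ge0; have := sqrtr_ge0 (3 * b * d).
rewrite /cstar; set s := Num.sqrt _ => s_ge0 s2 c_ge c_le0.
by rewrite -s2; nra.
Qed.

Lemma cstar_le_quadratic_ge0 (s : R) : cstar b d <= c -> 0 <= s ->
  0 <= 4 * b + 4 * c * s + 3 * d * s ^+ 2.
Proof.
move=> c_ge s_ge0; have [c_ge0|c_lt0] := leP 0 c.
  have ds2_ge0 : 0 <= d * s ^+ 2 by rewrite mulr_ge0 ?sqr_ge0 ?ltW.
  have cs_ge0 : 0 <= c * s by rewrite mulr_ge0.
  have := b_gt0; lra.
have c2_le := cstar_le_sqr c_ge (ltW c_lt0).
have square : 3 * d * (4 * b + 4 * c * s + 3 * d * s ^+ 2)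
       = (3 * d * s + 2 * c) ^+ 2 + 4 * (3 * b * d - c ^+ 2) by ring.
have d3_gt0 : 0 < 3 * d by rewrite mulr_gt0.
rewrite -(pmulr_rge0 _ d3_gt0) square.
by rewrite addr_ge0 ?sqr_ge0 // mulr_ge0 // subr_ge0.
Qed.

Lemma psi_increasing (u v : R) : cstar b d <= c -> 0 < v -> v < u -> psi v < psi u.
Proof.
move=> c_ge v_gt0 vu; rewrite -subr_gt0 psiB mulr_gt0 ?subr_gt0 //.
have uv_gt0 : 0 < u + v by rewrite addr_gt0 // (lt_trans v_gt0).
have quad_ge0 := cstar_le_quadratic_ge0 c_ge (ltW uv_gt0).
have dist_gt0 : 0 < d * (u - v) ^+ 2 by rewrite mulr_gt0 ?exprn_gt0 ?subr_gt0.
nra.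
Qed.

Lemma phi_decreasing (x y : R) : cstar b d <= c -> 0 < x -> x < y ->
  phi a b c d y < phi a b c d x.
Proof.
move=> c_ge x_gt0 xy; have y_gt0 := lt_trans x_gt0 xy.
rewrite !phiE ?gt_eqF // psi_increasing ?invr_gt0 //.
by rewrite ltf_pV2 ?posrE.
Qed.

Local Notation sqrt_disc := (Num.sqrt (c ^+ 2 - 3 * b * d)).

Lemma lt_cstar_disc : c < cstar b d -> c < 0 /\ 0 < c ^+ 2 - 3 * b * d.
Proof.
have bd_ge0 : 0 <= 3 * b * d by rewrite !mulr_ge0 ?ltW.
have := sqr_sqrtr bd_ge0; have := sqrtr_ge0 (3 * b * d).
rewrite /cstar subr_gt0; set s := Num.sqrt _ => s_ge0 s2 c_lt.
by split; [lra | rewrite -s2; nra].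
Qed.

Lemma sqrt_disc_gt0 : c < cstar b d -> 0 < sqrt_disc.
Proof. by case/lt_cstar_disc => _; rewrite sqrtr_gt0. Qed.

Lemma sqr_sqrt_disc : c < cstar b d -> sqrt_disc ^+ 2 = c ^+ 2 - 3 * b * d.
Proof. by case/lt_cstar_disc => _ /ltW; apply: sqr_sqrtr. Qed.

Lemma sqrt_disc_lt : c < cstar b d -> sqrt_disc < - c.
Proof.
move=> c_lt; have [c_lt0 _] := lt_cstar_disc c_lt.
have S_gt0 := sqrt_disc_gt0 c_lt; have S2 := sqr_sqrt_disc c_lt.
have bd_gt0 : 0 < b * d by rewrite mulr_gt0.
move: S_gt0 S2; set S := Num.sqrt _ => S_gt0 S2; nra.
Qed.

(* Both critical points at once: [s = sqrt_disc] gives [x_m], [s = - sqrt_disc] gives [x_M]. *)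
Lemma critical_prod (s : R) : s ^+ 2 = c ^+ 2 - 3 * b * d ->
  (- c + s) * (- c - s) = b * (3 * d).
Proof.
move=> s2; have -> : (- c + s) * (- c - s) = c ^+ 2 - s ^+ 2 by ring.
by rewrite s2; ring.
Qed.

Lemma critical_num_neq0 (s : R) : s ^+ 2 = c ^+ 2 - 3 * b * d -> - c - s != 0.
Proof.
move=> s2; have bd3_gt0 : 0 < b * (3 * d) by rewrite !mulr_gt0.
by apply: contraTneq bd3_gt0 => cs0; rewrite -(critical_prod s2) cs0 mulr0 ltxx.
Qed.

Lemma critical_inv (s : R) : s ^+ 2 = c ^+ 2 - 3 * b * d ->
  ((- c - s) / b)^-1 = (- c + s) / (3 * d).
Proof.
move=> s2; have d3_neq0 : 3 * d != 0 by rewrite gt_eqF ?mulr_gt0.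
rewrite invf_div; apply/eqP.
by rewrite eqr_div ?critical_num_neq0 // critical_prod.
Qed.

Lemma psiB_critical (s y : R) : s ^+ 2 = c ^+ 2 - 3 * b * d ->
  psi y - psi ((- c + s) / (3 * d))
  = (y - (- c + s) / (3 * d)) ^+ 2 * (d * (y - (- c - s) / (3 * d)) + s / 3).
Proof.
move=> s2; have bE : b = (c ^+ 2 - s ^+ 2) / (3 * d).
  by rewrite s2; field; rewrite gt_eqF.
by rewrite /psi bE; field; rewrite gt_eqF.
Qed.

Lemma phiB_critical (s x : R) : s ^+ 2 = c ^+ 2 - 3 * b * d -> 0 < x ->
  phi a b c d x - phi a b c d ((- c - s) / b)
  = (x^-1 - (- c + s) / (3 * d)) ^+ 2 * (d * (x^-1 - (- c - s) / (3 * d)) + s / 3).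
Proof.
move=> s2 x_gt0; rewrite phiE ?gt_eqF // phiE ?critical_inv ?psiB_critical //.
by rewrite mulf_neq0 ?critical_num_neq0 ?invr_neq0 ?gt_eqF.
Qed.

Lemma critical_points_pos : c < cstar b d ->
  0 < (- c - sqrt_disc) / b /\ (- c - sqrt_disc) / b < (- c + sqrt_disc) / b.
Proof.
move=> c_lt; have S_gt0 := sqrt_disc_gt0 c_lt.
rewrite divr_gt0 ?subr_gt0 ?sqrt_disc_lt // ltr_pM2r ?invr_gt0 //.
by rewrite ltrD2l gtrN.
Qed.

Lemma phi_local_min : c < cstar b d ->
  local_min_pt (phi a b c d) ((- c - sqrt_disc) / b).
Proof.
move=> c_lt; have [xm_gt0 xm_lt] := critical_points_pos c_lt.
have S_gt0 := sqrt_disc_gt0 c_lt; have S2 := sqr_sqrt_disc c_lt.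
move: xm_gt0 xm_lt S_gt0 S2; set S := Num.sqrt _ => xm_gt0 xm_lt S_gt0 S2.
have xM_inv : ((- c + S) / b)^-1 = (- c - S) / (3 * d).
  by have := @critical_inv (- S); rewrite sqrrN opprK; apply.
exists ((- c + S) / b - (- c - S) / b); first by rewrite subr_gt0.
move=> y y_gt0 y_near; have y_lt : y < (- c + S) / b.
  by have := ler_norm (y - (- c - S) / b); lra.
have y_inv : (- c - S) / (3 * d) < y^-1.
  by rewrite -xM_inv ltf_pV2 ?posrE // (lt_trans y_gt0).
rewrite -subr_ge0 phiB_critical // mulr_ge0 ?sqr_ge0 // addr_ge0 ?ltW ?divr_gt0 //.
by rewrite mulr_gt0 // subr_gt0.
Qed.

Lemma phi_local_max : c < cstar b d ->
  local_max_pt (phi a b c d) ((- c + sqrt_disc) / b).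
Proof.
move=> c_lt; have [xm_gt0 xm_lt] := critical_points_pos c_lt.
have S_gt0 := sqrt_disc_gt0 c_lt; have S2 := sqr_sqrt_disc c_lt.
move: xm_gt0 xm_lt S_gt0 S2; set S := Num.sqrt _ => xm_gt0 xm_lt S_gt0 S2.
have xm_inv : ((- c - S) / b)^-1 = (- c + S) / (3 * d) by rewrite critical_inv.
have NS2 : (- S) ^+ 2 = c ^+ 2 - 3 * b * d by rewrite sqrrN.
exists ((- c + S) / b - (- c - S) / b); first by rewrite subr_gt0.
move=> y y_gt0 y_near; have y_gt : (- c - S) / b < y.
  by have := ler_norm ((- c + S) / b - y); rewrite distrC in y_near; lra.
have y_inv : y^-1 < (- c + S) / (3 * d) by rewrite -xm_inv ltf_pV2 ?posrE.
rewrite -subr_le0; have := phiB_critical NS2 y_gt0; rewrite opprK => ->.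
rewrite mulr_ge0_le0 ?sqr_ge0 //.
have : d * (y^-1 - (- c + S) / (3 * d)) < 0 by rewrite pmulr_rlt0 // subr_lt0.
have : 0 < S / 3 by rewrite divr_gt0.
lra.
Qed.

End ThePhiMap.

Theorem theorem1 (R : rcfType) (a b c d : R) :
  0 < a -> 0 < b -> 0 < d ->
  (* (a) *)
  (exists! cm : R, cm < 0 /\ Qpol a b d cm = 0) /\
  forall cm : R, cm < 0 -> Qpol a b d cm = 0 ->
    (* (b) *)
    (cm < c -> forall x0 : R, 0 < x0 ->
       forall n : nat, 0 < iter n (phi a b c d) x0) /\
    (* (c) *)
    cm < cstar b d /\
    (* (d), first case *)
    (cstar b d <= c ->
       (forall x y : R, 0 < x -> x < y -> phi a b c d y < phi a b c d x) /\
       (exists! t : R, 0 < t /\ phi a b c d t = t)) /\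
    (* (d), second case *)
    (cm < c -> c < cstar b d ->
       let xm := (- c - Num.sqrt (c ^+ 2 - 3 * b * d)) / b in
       let xM := (- c + Num.sqrt (c ^+ 2 - 3 * b * d)) / b in
       0 < xm /\ xm < xM /\
       local_min_pt (phi a b c d) xm /\ local_max_pt (phi a b c d) xM).
Proof.
move=> a_gt0 b_gt0 d_gt0; split.
  have [r r_lt0 Qr] := Qpol_neg_root a_gt0 b_gt0 d_gt0.
  exists r; split => // s [s_lt0 Qs].
  exact: (Qpol_neg_root_uniq a_gt0 b_gt0 d_gt0 s_lt0 Qs r_lt0 Qr).
move=> r r_lt0 Qr; split.
  by move=> r_lt_c x x_gt0 n; exact: (iter_phi_gt0 a_gt0 b_gt0 d_gt0 n r_lt0 Qr r_lt_c x_gt0).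
split; first exact: (neg_root_lt_cstar a_gt0 b_gt0 d_gt0 r_lt0 Qr).
split.
  move=> c_ge; have phi_decr := phi_decreasing a b_gt0 d_gt0 c_ge.
  split => //; have [t t_gt0 phit] := phi_fixed_point a b c d_gt0.
  exists t; split => // s [s_gt0 phis].
  exact: (decreasing_fixed_point_uniq phi_decr t_gt0 s_gt0 phit phis).
move=> _ c_lt /=; have [xm_gt0 xm_lt] := critical_points_pos b_gt0 d_gt0 c_lt.
do 2!split=> //; split; first exact: (phi_local_min a b_gt0 d_gt0 c_lt).
exact: (phi_local_max a b_gt0 d_gt0 c_lt).
Qed.
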